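(* For $i\in\{1,2\}$ let $(\mathcal B_{i,\mathbb R},\mathcal S_i,e_i,m_i)$ be as in the context, let $\mathcal L\in L(\mathcal B_{1,\mathbb R},\mathcal B_{2,\mathbb R})$, $\mathcal L_{\mathbb C}\in L(\mathcal B_{1,\mathbb C},\mathcal B_{2,\mathbb C})$ and $\varepsilon>0$. For $h\in\mathcal C_{1,\mathbb R}$ write $\mathcal L_{\mathbb C}h=a(h)+ib(h)$ with $a(h),b(h)\in\mathcal B_{2,\mathbb R}$. If for each $h\in\mathcal C_{1,\mathbb R}$ \[\varepsilon\mathcal Lh\pm2[\mathcal Lh-a(h)]\in\mathcal C_{2,\mathbb R}\quad\text{and}\quad\varepsilon\mathcal Lh\pm2b(h)\in\mathcal C_{2,\mathbb R},\] then for all $\ell\in\mathcal S_2$ and $h\in\mathcal C_{1,\mathbb R}$, $|\ell(\mathcal L_{\mathbb C}h)-\ell(\mathcal Lh)|\le\varepsilon\,\ell(\mathcal Lh)$.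
   Context: Cone setting. $V$ is a real topological vector space, $\mathcal S\subset V'$ a set of linear functionals such that $\ell(x)=0$ for all $\ell\in\mathcal S$ implies $x=0$, $C_{\mathbb R}=\{h\in V\setminus\{0\}:\ell(h)\ge0\ \forall\ell\in\mathcal S\}$, $e\in C_{\mathbb R}$ such that for every $h\in V$ some $\lambda\ge0$ has $\lambda e-h\in C_{\mathbb R}$. Norm $\|h\|=\inf\{\lambda\ge0:\ell(\lambda e\pm h)\ge0\ \forall\ell\in\mathcal S\}$; $\mathcal B_{\mathbb R}$ the completion; $\mathcal C_{\mathbb R}=\{h\in\mathcal B_{\mathbb R}\setminus\{0\}:\ell(h)\ge0\ \forall\ell\in\mathcal S\}$; there are $m$ in the weak-$*$ closure of the convex hull of $\{\lambda\ell:\lambda>0,\ell\in\mathcal S\}$ and $\kappa\in(0,1)$ with $m(e)=1$, $m(h)\ge\kappa\|h\|$ on $\mathcal C_{\mathbb R}$. $\mathcal B_{\mathbb C}$ is the complexification $\{x+iy:x,y\in\mathcal B_{\mathbb R}\}$ with real functionals extended complex-linearly. Objects of the $i$-th space carry index $i$. *)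

From HB Require Import structures.
From mathcomp Require Import all_boot all_order all_algebra.
From mathcomp Require Import all_classical all_reals all_analysis.
From mathcomp Require Import complex.
Set Implicit Arguments. Unset Strict Implicit. Unset Printing Implicit Defensive.
Import Order.TTheory GRing.Theory Num.Theory.
Import numFieldNormedType.Exports.
Local Open Scope classical_set_scope.
Local Open Scope ring_scope.

Definition is_rlinear (R : realType) (U W : lmodType R) (f : U -> W) :=
  forall (a : R) (x y : U), f (a *: x + y) = a *: f x + f y.

Definition cone (R : realType) (B : lmodType R) (S : set (B -> R)) : set B :=
  [set h | h <> 0 /\ forall l, S l -> 0 <= l h].

(* g = sum_{j<=k} mu_j l_j with mu_j > 0, l_j in S : the convex hull of
   {lam l : lam > 0, l in S} *)
Definition in_conv_pos_multiples (R : realType) (B : lmodType R)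
    (S : set (B -> R)) (g : B -> R) :=
  exists (k : nat) (mu : 'I_k.+1 -> R) (ls : 'I_k.+1 -> (B -> R)),
    (forall j, 0 < mu j /\ S (ls j)) /\
    forall x, g x = \sum_(j < k.+1) mu j * ls j x.

(* m lies in the weak-* closure of that convex hull: every weak-* basic
   neighbourhood of m meets it *)
Definition in_weakstar_closure (R : realType) (B : lmodType R)
    (S : set (B -> R)) (m : B -> R) :=
  forall (n : nat) (xs : 'I_n -> B) (d : R), 0 < d ->
    exists g, in_conv_pos_multiples S g /\
      forall i, `|g (xs i) - m (xs i)| < d.

Definition cone_norm (R : realType) (B : lmodType R) (S : set (B -> R))
    (e h : B) : R :=
  inf [set lam : R | 0 <= lam /\
        forall l, S l -> 0 <= l (lam *: e + h) /\ 0 <= l (lam *: e - h)].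

Definition cone_setting (R : realType) (B : completeNormedModType R)
    (S : set (B -> R)) (e : B) (m : B -> R) (kappa : R) : Prop :=
  [/\ (forall l, S l -> is_rlinear (l : B -> R^o) /\ continuous l),
      (forall x, (forall l, S l -> l x = 0) -> x = 0),
      cone S e /\ (forall h : B, exists lam : R, 0 <= lam /\ cone S (lam *: e - h)),
      (forall h : B, `|h| = cone_norm S e h) &
      [/\ is_rlinear (m : B -> R^o), continuous m, in_weakstar_closure S m,
          m e = 1 /\ 0 < kappa < 1 &
          (forall h, cone S h -> kappa * `|h| <= m h)]].

(* complexification B_C = B x B, (x, y) standing for x + i y *)
Definition mulI (R : realType) (B : lmodType R) (z : B * B) : B * B :=
  (- z.2, z.1).

Definition is_clinear (R : realType) (B1 B2 : normedModType R)
    (LC : B1 * B1 -> B2 * B2) :=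
  [/\ forall (a : R) (x y : B1 * B1),
        LC (a *: x.1 + y.1, a *: x.2 + y.2) =
        (a *: (LC x).1 + (LC y).1, a *: (LC x).2 + (LC y).2),
      forall z, LC (mulI z) = mulI (LC z) &
      continuous LC].

Definition cext (R : realType) (B : lmodType R) (l : B -> R) (z : B * B)
  : R[i] := Complex (l z.1) (l z.2).

From HB Require Import structures.
From mathcomp Require Import all_boot all_order all_algebra.
From mathcomp Require Import all_classical all_reals all_analysis.
From mathcomp Require Import complex.
From mathcomp Require Import lra.
Set Implicit Arguments. Unset Strict Implicit. Unset Printing Implicit Defensive.
Import Order.TTheory GRing.Theory Num.Theory.
Import numFieldNormedType.Exports.
Local Open Scope classical_set_scope.
Local Open Scope ring_scope.

(* The two cone conditions bound the real and imaginary parts of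
   [l (LC h) - l (L h)] by [eps * l (L h) / 2] in absolute value, hence its
   modulus by [eps * l (L h) / sqrt 2 <= eps * l (L h)]. *)

Section RealLinear.
Variables (R : realType) (U W : lmodType R) (f : U -> W).
Hypothesis f_lin : is_rlinear f.

Lemma rlinearD x y : f (x + y) = f x + f y.
Proof. by have := f_lin 1 x y; rewrite !scale1r. Qed.

Lemma rlinear0 : f 0 = 0.
Proof. by apply: (@addrI _ (f 0)); rewrite addr0 -rlinearD addr0. Qed.

Lemma rlinearZ (a : R) x : f (a *: x) = a *: f x.
Proof. by have := f_lin a x 0; rewrite !addr0 rlinear0 addr0. Qed.

Lemma rlinearB x y : f (x - y) = f x - f y.
Proof. by rewrite rlinearD -scaleN1r rlinearZ scaleN1r. Qed.

End RealLinear.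

Lemma cone_ge0 (R : realType) (B : lmodType R) (S : set (B -> R)) l x :
  S l -> cone S x -> 0 <= l x.
Proof. by move=> Sl [_ /(_ l Sl)]. Qed.

Lemma cone_pm_norm_le (R : realType) (B : lmodType R) (S : set (B -> R))
    (l : B -> R) x y :
  is_rlinear (l : B -> R^o) -> S l -> cone S (x + y) -> cone S (x - y) ->
  `|l y| <= l x.
Proof.
move=> l_lin Sl /(cone_ge0 Sl) + /(cone_ge0 Sl).
rewrite (rlinearD l_lin) (rlinearB l_lin) ler_norml => ? ?.
by apply/andP; split; lra.
Qed.

Lemma normc_le_halves (R : rcfType) (a b c : R) :
  2 * `|a| <= c -> 2 * `|b| <= c -> `|(a +i* b)%C| <= c%:C%C.
Proof.
move=> le_a le_b; rewrite normc_def /= lecR.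
have c_ge0 : 0 <= c by apply: le_trans le_b; rewrite mulr_ge0.
rewrite -(ger0_norm c_ge0) -sqrtr_sqr ler_sqrt ?exprn_ge0 //.
rewrite -[a ^+ 2]real_normK ?num_real // -[b ^+ 2]real_normK ?num_real //.
have := normr_ge0 a; have := normr_ge0 b; nra.
Qed.

Theorem lemma5p18 (R : realType)
  (B1 B2 : completeNormedModType R)
  (S1 : set (B1 -> R)) (e1 : B1) (m1 : B1 -> R) (kappa1 : R)
  (S2 : set (B2 -> R)) (e2 : B2) (m2 : B2 -> R) (kappa2 : R)
  (cs1 : cone_setting S1 e1 m1 kappa1)
  (cs2 : cone_setting S2 e2 m2 kappa2)
  (L : B1 -> B2) (LC : B1 * B1 -> B2 * B2) (eps : R)
  (L_lin : is_rlinear L) (L_cont : continuous L)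
  (LC_lin : is_clinear LC) (eps_gt0 : 0 < eps)
  (hyp : forall h : B1, cone S1 h ->
     let a := (LC (h, 0)).1 in let b := (LC (h, 0)).2 in
     [/\ cone S2 (eps *: L h + 2 *: (L h - a)),
         cone S2 (eps *: L h - 2 *: (L h - a)),
         cone S2 (eps *: L h + 2 *: b) &
         cone S2 (eps *: L h - 2 *: b)]) :
  forall (l : B2 -> R) (h : B1), S2 l -> cone S1 h ->
    `| cext l (LC (h, 0)) - ((l (L h))%:C)%C | <= ((eps * l (L h))%:C)%C.
Proof.
move=> l h Sl Ch.
have [l_lin _] : is_rlinear (l : B2 -> R^o) /\ continuous l.
  by case: cs2 => S2_lin _ _ _ _; exact: S2_lin.
have [re_plus re_minus im_plus im_minus] := hyp h Ch.
have le_re := cone_pm_norm_le l_lin Sl re_plus re_minus.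
have le_im := cone_pm_norm_le l_lin Sl im_plus im_minus.
rewrite !(rlinearZ l_lin, rlinearB l_lin) /GRing.scale /= in le_re le_im.
rewrite normrM ger0_norm // in le_re; rewrite normrM ger0_norm // in le_im.
rewrite /cext; set u := l _.1; set v := l _.2; set x := l (L h).
have -> : (u +i* v - x%:C = (u - x) +i* v)%C by rewrite [LHS]/GRing.add /= subr0.
by apply: normc_le_halves; rewrite // distrC.
Qed.
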